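(* Let $V=\Sigma^aH(b)$ and $W=\Sigma^sH(t)$ be representation cells (so $0\le b\le a$ and $0\le t\le s$) with $a\geq s$, and with $b\geq t$ in case $a=s$. Then for any map $f\colon\Sigma^{-1}V\to W$ in $\mathcal D(\underline{\mathbb Z/2})$, exactly one of the following holds: (1) $\mathrm{tp}(\Sigma^{-1}V)=\mathrm{tp}(W)$ and $\mathrm{cowt}(\Sigma^{-1}V)=\mathrm{cowt}(W)$ (so $\Sigma^{-1}V=W$) and $f$ is homotopic to the identity; (2) $\mathrm{tp}(\Sigma^{-1}V)=\mathrm{tp}(W)$ and $\mathrm{cowt}(\Sigma^{-1}V)>\mathrm{cowt}(W)$, and $f$ is homotopic to the chain map which is the identity $F\to F$ in each degree where $\Sigma^{-1}V$ has an $F$, and is $p\colon H\to F$ in degree $\mathrm{cowt}(\Sigma^{-1}V)$; (3) $\mathrm{tp}(\Sigma^{-1}V)\ge\mathrm{tp}(W)$ and $\mathrm{cowt}(\Sigma^{-1}V)\le\mathrm{cowt}(W)-2$, and $f$ is homotopic to the chain map which is $u\colon F\to F$ in degree $\mathrm{tp}(W)$ and zero in all other degrees; (4) $f$ is null-homotopic.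
   Context: A $\underline{\mathbb Z/2}$-module is a pair of $\mathbb F_2$-vector spaces $M_\Theta,M_\bullet$ with maps $t\colon M_\Theta\to M_\Theta$, $p^*\colon M_\bullet\to M_\Theta$, $p_*\colon M_\Theta\to M_\bullet$ with $tp^*=p^*$, $p_*t=p_*$, $t^2=1$, $p^*p_*=1+t$, $p_*p^*=0$. $H$: both spaces $\mathbb F_2$, $t=p^*=\mathrm{id}$, $p_*=0$. $F$: $F_\Theta=\mathbb F_2^2$, $t$ the swap, $F_\bullet=\mathbb F_2$, $p_*(x,y)=x+y$, $p^*(z)=(z,z)$. $p\colon F\to H$ and $p\colon H\to F$ are the unique nonzero maps; $u=1+t\colon F\to F$. Homological grading, $(\Sigma C)_i=C_{i-1}$. $H(0)=H$ in degree $0$; for $q>0$, $H(q)$ is $F\xrightarrow{u}\cdots\xrightarrow{u}F\xrightarrow{p}H$ with $F$ in degrees $0,\dots,-(q-1)$ and $H$ in degree $-q$. A representation cell is a complex $\Sigma^mH(q)$ with $0\le q\le m$; for such a complex (and its desuspensions $\Sigma^{m-1}H(q)$, treated the same way) the topological dimension $\mathrm{tp}$ is the degree of its top $F$ (namely $m$ for $\Sigma^mH(q)$), the weight is $q$, and the coweight $\mathrm{cowt}$ is the degree $m-q$ of its bottom $H$. $\mathcal D(\underline{\mathbb Z/2})$ is the derived category; ''homotopic'' means equal in $\mathcal D(\underline{\mathbb Z/2})$ (equivalently chain homotopic, as these complexes are bounded complexes of projectives). *)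

From mathcomp Require Import all_boot all_order all_algebra.
Set Implicit Arguments. Unset Strict Implicit. Unset Printing Implicit Defensive.
Import GRing.Theory.
Local Open Scope ring_scope.

(* A Z/2-module: M_Theta = F_2^dT, M_bullet = F_2^dB (row vectors, maps act
   on the right: x |-> x *m A).  tm = t, psu = p^*, psl = p_*. *)
Record z2mod := Z2Mod {
  dT : nat; dB : nat;
  tm : 'M['F_2]_(dT);
  psu : 'M['F_2]_(dB, dT);
  psl : 'M['F_2]_(dT, dB)
}.

Definition z2mod_axioms (M : z2mod) : Prop :=
  [/\ psu M *m tm M = psu M, tm M *m psl M = psl M, tm M *m tm M = 1%:M,
      psl M *m psu M = 1%:M + tm M & psu M *m psl M = 0].

Definition mor (M N : z2mod) := ('M['F_2]_(dT M, dT N) * 'M['F_2]_(dB M, dB N))%type.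

Definition is_mor (M N : z2mod) (f : mor M N) : Prop :=
  [/\ tm M *m f.1 = f.1 *m tm N,
      psu M *m f.1 = f.2 *m psu N &
      psl M *m f.2 = f.1 *m psl N].

(* composition in diagrammatic order: first f then g *)
Definition mcomp (M N P : z2mod) (f : mor M N) (g : mor N P) : mor M P :=
  (f.1 *m g.1, f.2 *m g.2).
Definition madd (M N : z2mod) (f g : mor M N) : mor M N := (f.1 + g.1, f.2 + g.2).
Definition msub (M N : z2mod) (f g : mor M N) : mor M N := (f.1 - g.1, f.2 - g.2).
Definition mzero (M N : z2mod) : mor M N := (0, 0).
Arguments mzero {M N}.

(* INDEXING CONVENTION: the object at
   index n : nat sits in homological degree n - 1 (so degrees >= -1; all
   complexes here vanish in degrees <= -2).  cdif n : C_{n+1} -> C_n. *)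
Record cplx := Cplx {
  cobj : nat -> z2mod;
  cdif : forall n, mor (cobj n.+1) (cobj n)
}.

Definition is_cplx (C : cplx) : Prop :=
  (forall n, is_mor (cdif C n)) /\
  (forall n, mcomp (cdif C n.+1) (cdif C n) = mzero).

Definition is_chain_map (C D : cplx) (f : forall n, mor (cobj C n) (cobj D n)) : Prop :=
  (forall n, is_mor (f n)) /\
  (forall n, mcomp (cdif C n) (f n) = mcomp (f n.+1) (cdif D n)).

Definition homotopic (C D : cplx) (f g : forall n, mor (cobj C n) (cobj D n)) : Prop :=
  exists h : forall n, mor (cobj C n) (cobj D n.+1),
    (forall n, is_mor (h n)) /\
    msub (f 0%N) (g 0%N) = mcomp (h 0%N) (cdif D 0) /\
    (forall n, msub (f n.+1) (g n.+1) =
               madd (mcomp (cdif C n) (h n)) (mcomp (h n.+1) (cdif D n.+1))).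

Definition swap2 : 'M['F_2]_2 := \matrix_(i < 2, j < 2) (i != j)%:R.
Definition Fmod : z2mod := @Z2Mod 2 1 swap2 (const_mx 1) (const_mx 1).
Definition Hmod : z2mod := @Z2Mod 1 1 1 1 0.
Definition Zmod : z2mod := @Z2Mod 0 0 0 0 0.

Inductive kind := K0 | KF | KH.
Definition modOf (k : kind) : z2mod :=
  match k with K0 => Zmod | KF => Fmod | KH => Hmod end.

Definition idF : mor Fmod Fmod := (1%:M, 1%:M).
Definition idH : mor Hmod Hmod := (1%:M, 1%:M).
Definition uF  : mor Fmod Fmod := (const_mx 1, 0).        (* u = 1 + t *)
Definition pFH : mor Fmod Hmod := (const_mx 1, 0).        (* (x,y) |-> x+y *)
Definition pHF : mor Hmod Fmod := (const_mx 1, 1%:M).     (* z |-> (z,z) *)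

Inductive stdk := sId | sP | sU.
Definition std (s : stdk) (k1 k2 : kind) : mor (modOf k1) (modOf k2) :=
  match k1 as x1, k2 as x2 return mor (modOf x1) (modOf x2) with
  | KF, KF => match s with sId => idF | sU => uF | sP => mzero end
  | KH, KH => match s with sId => idH | _ => mzero end
  | KF, KH => match s with sP => pFH | _ => mzero end
  | KH, KF => match s with sP => pHF | _ => mzero end
  | _, _ => mzero
  end.

Definition kindc (lo q k : nat) : kind :=
  (if k == lo then KH else if (lo < k) && (k <= lo + q) then KF else K0)%N.

Definition cellc (lo q : nat) : cplx :=
  @Cplx (fun n => modOf (kindc lo q n))
        (fun n => std (if n == lo then sP else sU) (kindc lo q n.+1) (kindc lo q n)).

(* Sigma^m H(q) (H in degree m - q, i.e. index m - q + 1) *)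
Definition cell (m q : nat) : cplx := cellc (m - q).+1 q.
(* Sigma^{-1} (Sigma^m H(q)) = Sigma^{m-1} H(q) (H in degree m-q-1, index m-q) *)
Definition dcell (m q : nat) : cplx := cellc (m - q) q.

Definition tp_cell (m q : nat) : int := m%:Z.
Definition cowt_cell (m q : nat) : int := m%:Z - q%:Z.
Definition tp_dcell (m q : nat) : int := m%:Z - 1.
Definition cowt_dcell (m q : nat) : int := m%:Z - q%:Z - 1.

Definition cmap (a b s t : nat) :=
  forall n, mor (cobj (dcell a b) n) (cobj (cell s t) n).

Definition map1 (a b s t : nat) : cmap a b s t :=
  fun n => std sId (kindc (a - b) b n) (kindc (s - t).+1 t n).
Definition map2 (a b s t : nat) : cmap a b s t :=
  fun n => std (if n == (a - b)%N then sP else sId)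
               (kindc (a - b) b n) (kindc (s - t).+1 t n).
(* u : F -> F in degree tp(W) (index s+1), zero elsewhere.  If W = Sigma^s H(0)
   has H (not F) in degree tp(W), the map there is p : F -> H. *)
Definition map3 (a b s t : nat) : cmap a b s t :=
  fun n => if n == s.+1
           then std (if kindc (s - t).+1 t n is KF then sU else sP)
                    (kindc (a - b) b n) (kindc (s - t).+1 t n)
           else mzero.
Definition map0 (a b s t : nat) : cmap a b s t := fun n => mzero.

Definition exactly_one4 (P1 P2 P3 P4 : Prop) : Prop :=
  (P1 \/ P2 \/ P3 \/ P4) /\
  ~ (P1 /\ P2) /\ ~ (P1 /\ P3) /\ ~ (P1 /\ P4) /\
  ~ (P2 /\ P3) /\ ~ (P2 /\ P4) /\ ~ (P3 /\ P4).

From mathcomp Require Import all_boot all_order all_algebra.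
From mathcomp Require Import zify.
Import GRing.Theory Num.Theory.
Local Open Scope ring_scope.

(* Every morphism between the modules 0, F and H is given by at most two
   coefficients in F_2, and composing with the differentials u and p of a
   cell only sees their augmentation.  So chain maps and homotopies between
   two cells become bookkeeping with F_2-sequences: on the overlap of the two
   cells a chain map has constant augmentation, and a null-homotopy is given
   by running sums of the coefficients, taken from the top of W when W does
   not stick out above Sigma^-1 V, and from the bottom of W otherwise.  The
   only homotopy invariants left are the coefficient at the bottom H of
   Sigma^-1 V, which yields cases (1) and (2), and, when W starts at least
   two degrees higher, the sum of the coefficients over W, which yields
   case (3). *)

Set Implicit Arguments.
Unset Strict Implicit.
Unset Printing Implicit Defensive.

Lemma pchar_F2 : (2 \in [pchar 'F_2])%N.
Proof. exact: pchar_Fp. Qed.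

Lemma F2_cases (x : 'F_2) : x = 0 \/ x = 1.
Proof. by case: x => [[|[|n]] ?]; [left; apply: val_inj | right; apply: val_inj |]. Qed.

Lemma F2_addr_eq0 (x y : 'F_2) : x + y = 0 -> x = y.
Proof. by move/eqP; rewrite addr_eq0 oppr_pchar2 ?pchar_F2 // => /eqP. Qed.

Lemma F2_addrK (x y : 'F_2) : x + y + y = x.
Proof. by rewrite -addrA (addrr_pchar2 pchar_F2) addr0. Qed.

Lemma F2_addKr (x y : 'F_2) : x + (x + y) = y.
Proof. by rewrite addrA (addrr_pchar2 pchar_F2) add0r. Qed.

Lemma ord2P (i : 'I_2) : i = ord0 \/ i = ord_max.
Proof. by case: i => [[|[|?]] ?]; [left; apply: val_inj | right; apply: val_inj |]. Qed.

Lemma lift0_ord0 : (lift ord0 ord0 : 'I_2) = ord_max.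
Proof. exact: val_inj. Qed.

Ltac F2_brute := repeat match goal with
  | x : 'F_2 |- _ => case: (F2_cases x) => ->; clear x
  end.

Ltac ord_cases := repeat match goal with
  | i : 'I_ _ |- _ =>
      first [ by case: i | rewrite (ord1 i); clear i | case: (ord2P i) => ->; clear i ]
  end.

Ltac F2_entries :=
  apply/matrixP => i j; rewrite !mxE ?big_ord_recl ?big_ord0 /=;
  ord_cases; rewrite ?mxE /=; F2_brute; by apply/eqP.

Tactic Notation "mx_entry" constr(E) uconstr(i) uconstr(j) :=
  let e := fresh "e" in
  have e := E; move/matrixP in e; move: {e} (e i j);
  rewrite /= !mxE ?big_ord_recl ?big_ord0 /= ?mxE /= ?lift0_ord0
          ?(mul0r, mul1r, mulr0, mulr1, addr0, add0r).

Definition isF (k : kind) := if k is KF then true else false.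
Definition isH (k : kind) := if k is KH then true else false.
Definition isZ (k : kind) := if k is K0 then true else false.

Lemma isF_nz k : isF k -> ~~ isZ k.
Proof. by case: k. Qed.

(* By kmorE every morphism between 0, F and H is of this form: x + y t on
   F -> F, and x times a generator of Hom(F, H), Hom(H, F) and Hom(H, H). *)
Definition kmor (k1 k2 : kind) (x y : 'F_2) : mor (modOf k1) (modOf k2) :=
  match k1, k2 with
  | KF, KF => (\matrix_(i, j) (if i == j then x else y), const_mx (x + y))
  | KF, KH => (const_mx x, 0)
  | KH, KF | KH, KH => (const_mx x, const_mx x)
  | _, _ => (0, 0)
  end.

Definition mcoef (k1 k2 : kind) : mor (modOf k1) (modOf k2) -> 'F_2 :=
  match k1, k2 with
  | K0, _ | _, K0 => fun _ => 0
  | _, _ => fun m => m.1 ord0 ord0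
  end.

Definition tcoef (k1 k2 : kind) : mor (modOf k1) (modOf k2) -> 'F_2 :=
  match k1, k2 with
  | KF, KF => fun m => m.1 ord0 ord_max
  | _, _ => fun _ => 0
  end.

(* Composites with u and p only see the augmentation x + y of x + y t. *)
Definition aug (k1 k2 : kind) (m : mor (modOf k1) (modOf k2)) : 'F_2 :=
  if isF k1 && isF k2 then mcoef m + tcoef m else mcoef m.

(* c times u, p, p, 1 on F -> F, F -> H, H -> F, H -> H. *)
Definition nmor (k1 k2 : kind) (c : 'F_2) := kmor k1 k2 c c.

Definition dmor (k1 k2 : kind) := nmor k1 k2 (isF k1)%:R.

Ltac F2_mor_eq :=
  rewrite /mcomp /madd /msub /nmor /kmor /aug /=; congr pair; F2_entries.

Lemma is_mor_kmor k1 k2 x y : is_mor (kmor k1 k2 x y).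
Proof. by case: k1; case: k2; split; F2_entries. Qed.

Lemma kmorE k1 k2 (m : mor (modOf k1) (modOf k2)) :
  is_mor m -> m = kmor k1 k2 (mcoef m) (tcoef m).
Proof.
case: m; case: k1; case: k2 => /= m1 m2 [/= E1 E2 E3];
  congr pair; apply/matrixP => i j; ord_cases; rewrite ?mxE //=.
- by mx_entry E1 ord0 ord0.
- by mx_entry E1 ord0 ord_max.
- by mx_entry E1 ord0 ord0; mx_entry E2 ord0 ord0 => <- ->.
- by mx_entry E1 ord0 ord0.
- by mx_entry E3 ord0 ord0.
- by mx_entry E1 ord0 ord0.
- by mx_entry E2 ord0 ord0.
- by mx_entry E2 ord0 ord0.
Qed.

Lemma eq_kmor k1 k2 x y x' y' :
  (~~ isZ k1 -> ~~ isZ k2 -> x = x') -> (isF k1 -> isF k2 -> y = y') ->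
  kmor k1 k2 x y = kmor k1 k2 x' y'.
Proof. by case: k1; case: k2 => //= Hx Hy; rewrite ?Hx ?Hy. Qed.

Lemma mcoef_kmor k1 k2 x y :
  mcoef (kmor k1 k2 x y) = if isZ k1 || isZ k2 then 0 else x.
Proof. by case: k1; case: k2; rewrite /= ?mxE. Qed.

Lemma mcoef_nmor k1 k2 c : mcoef (nmor k1 k2 c) = if isZ k1 || isZ k2 then 0 else c.
Proof. exact: mcoef_kmor. Qed.

Lemma aug_kmor k1 k2 x y :
  aug (kmor k1 k2 x y) =
  if isZ k1 || isZ k2 then 0 else if isF k1 && isF k2 then x + y else x.
Proof. by case: k1; case: k2; rewrite /aug /= ?mxE. Qed.

Lemma aug_nFF k1 k2 (m : mor (modOf k1) (modOf k2)) :
  ~~ (isF k1 && isF k2) -> aug m = mcoef m.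
Proof. by rewrite /aug => /negbTE ->. Qed.

Lemma aug_isZ k1 k2 (m : mor (modOf k1) (modOf k2)) : isZ k1 || isZ k2 -> aug m = 0.
Proof. by case: k1 m; case: k2. Qed.

Lemma mcoef_msub k1 k2 (m m' : mor (modOf k1) (modOf k2)) :
  mcoef (msub m m') = mcoef m - mcoef m'.
Proof. by case: k1 m m'; case: k2 => m m'; rewrite /= ?mxE ?subr0. Qed.

Lemma aug_msub k1 k2 (m m' : mor (modOf k1) (modOf k2)) :
  aug (msub m m') = aug m - aug m'.
Proof.
rewrite /aug mcoef_msub; case: ifP => // _; rewrite opprD addrACA.
by case: k1 m m'; case: k2 => m m'; rewrite /= ?mxE ?subr0.
Qed.

Lemma mcoef_mzero k1 k2 : mcoef (mzero : mor (modOf k1) (modOf k2)) = 0.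
Proof. by case: k1; case: k2; rewrite /= ?mxE. Qed.

Lemma aug_mzero k1 k2 : aug (mzero : mor (modOf k1) (modOf k2)) = 0.
Proof. by case: k1; case: k2; rewrite /aug /= ?mxE ?addr0. Qed.

Lemma msubm0 M N (m : mor M N) : msub m mzero = m.
Proof. by case: m => m1 m2; rewrite /msub /= !subr0. Qed.

Lemma is_mor_mzero M N : is_mor (mzero : mor M N).
Proof. by split; rewrite /= ?mulmx0 ?mul0mx. Qed.

Lemma is_mor_std s k1 k2 : is_mor (std s k1 k2).
Proof.
by case: s; case: k1; case: k2; rewrite /std /idF /idH /uF /pFH /pHF; split; F2_entries.
Qed.

Lemma is_mor_msub k1 k2 (m m' : mor (modOf k1) (modOf k2)) :
  is_mor m -> is_mor m' -> is_mor (msub m m').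
Proof.
move=> Hm Hm'; rewrite (kmorE Hm) (kmorE Hm').
move: (mcoef m) (tcoef m) (mcoef m') (tcoef m') => x y x' y'; clear Hm Hm' m m'.
have -> : msub (kmor k1 k2 x y) (kmor k1 k2 x' y') = kmor k1 k2 (x - x') (y - y').
  by case: k1; case: k2; F2_mor_eq.
exact: is_mor_kmor.
Qed.

Lemma madd_nmor k1 k2 c c' : madd (nmor k1 k2 c) (nmor k1 k2 c') = nmor k1 k2 (c + c').
Proof. by case: k1; case: k2; F2_mor_eq. Qed.

Lemma eq_nmor k1 k2 c c' :
  (~~ isZ k1 -> ~~ isZ k2 -> c = c') -> nmor k1 k2 c = nmor k1 k2 c'.
Proof.
move=> E; apply: eq_kmor => [|F1 F2]; first exact: E.
by apply: E; apply: isF_nz.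
Qed.

Lemma mor_eq_nmor k1 k2 (m : mor (modOf k1) (modOf k2)) c :
  is_mor m -> (~~ isZ k1 -> ~~ isZ k2 -> mcoef m = c) ->
  (isF k1 -> isF k2 -> aug m = 0) -> m = nmor k1 k2 c.
Proof.
move=> Hm Hx Haug; rewrite (kmorE Hm); apply: eq_kmor => [|F1 F2]; first exact: Hx.
by move: (Haug F1 F2); rewrite /aug F1 F2 Hx ?isF_nz // => /F2_addr_eq0.
Qed.

Definition dcomp_l (k k' k'' : kind) := isF k && (isH k' || isF k' && isF k'').
Definition dcomp_r (k k' : kind) := isF k && isF k'.

Lemma mcomp_dmor_l {k k' k''} (m : mor (modOf k') (modOf k'')) : is_mor m ->
  mcomp (dmor k k') m = nmor k k'' (if dcomp_l k k' k'' then aug m else 0).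
Proof.
move/kmorE => ->; move: (mcoef m) (tcoef m) => x y; clear m.
by case: k; case: k'; case: k''; rewrite /dmor; F2_mor_eq.
Qed.

Lemma mcomp_dmor_r {k k' k''} (m : mor (modOf k) (modOf k')) : is_mor m ->
  mcomp m (dmor k' k'') = nmor k k'' (if dcomp_r k k' then aug m else 0).
Proof.
move/kmorE => ->; move: (mcoef m) (tcoef m) => x y; clear m.
by case: k; case: k'; case: k''; rewrite /dmor; F2_mor_eq.
Qed.

Lemma dcomp_l_aug_kmor k k' k'' x : ~~ isZ k'' ->
  (if dcomp_l k k' k'' then aug (kmor k' k'' x 0) else 0)
  = if dcomp_l k k' k'' then x else 0.
Proof. by case: k; case: k'; case: k''; rewrite ?aug_kmor /= ?addr0. Qed.

Lemma dcomp_r_aug_kmor k k' x :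
  (if dcomp_r k k' then aug (kmor k k' x 0) else 0) = if dcomp_r k k' then x else 0.
Proof. by case: k; case: k'; rewrite ?aug_kmor /= ?addr0. Qed.

Variant kindc_spec (lo q n : nat) : kind -> Type :=
  | KindcH of n = lo : kindc_spec lo q n KH
  | KindcF of (lo < n <= lo + q)%N : kindc_spec lo q n KF
  | Kindc0 of (n < lo)%N || (lo + q < n)%N : kindc_spec lo q n K0.

Lemma kindcP lo q n : kindc_spec lo q n (kindc lo q n).
Proof.
rewrite /kindc; case: eqP => [->|ne]; first by constructor.
by case: ifP => h; constructor; lia.
Qed.

Lemma isF_kindc lo q n : isF (kindc lo q n) = (lo < n <= lo + q)%N.
Proof. by case: kindcP => /=; lia. Qed.

Lemma isH_kindc lo q n : isH (kindc lo q n) = (n == lo).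
Proof. by case: kindcP => /=; lia. Qed.

Lemma isZ_kindc lo q n : isZ (kindc lo q n) = ~~ (lo <= n <= lo + q)%N.
Proof. by case: kindcP => /=; lia. Qed.

Lemma dcomp_l_kindc lo q n k :
  dcomp_l (kindc lo q n.+1) (kindc lo q n) k
  = (lo < n.+1 <= lo + q)%N && ((n == lo) || isF k).
Proof. by rewrite /dcomp_l !isF_kindc isH_kindc; lia. Qed.

Lemma cdif_cellc lo q n : cdif (cellc lo q) n = dmor (kindc lo q n.+1) (kindc lo q n).
Proof.
rewrite /=; case: kindcP => h1; case: kindcP => h2; case: eqP => h3; try lia;
  rewrite /dmor /std /=; F2_mor_eq.
Qed.

Section Cells.
Variables l1 q1 l2 q2 : nat.
Local Notation C := (cellc l1 q1).
Local Notation D := (cellc l2 q2).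
Local Notation kC := (kindc l1 q1).
Local Notation kD := (kindc l2 q2).
Local Notation top1 := (l1 + q1)%N.
Local Notation top2 := (l2 + q2)%N.
Local Notation cellmap := (forall n, mor (cobj C n) (cobj D n)).

(* The coefficient at index n of d h + h d, for h n = kmor _ _ (alpha n) 0. *)
Definition hcoef (alpha : nat -> 'F_2) n : 'F_2 :=
  (if n is n'.+1 then if dcomp_l (kC n) (kC n') (kD n) then alpha n' else 0 else 0)
  + (if dcomp_r (kC n) (kD n.+1) then alpha n else 0).

Lemma hcoef_nF alpha n : ~~ isF (kC n) -> hcoef alpha n = 0.
Proof. by rewrite /hcoef /dcomp_l /dcomp_r => /negbTE ->; case: n => [|n]; rewrite /= addr0. Qed.

Lemma hcoef0 alpha : hcoef alpha 0%N = if dcomp_r (kC 0%N) (kD 1%N) then alpha 0%N else 0.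
Proof. exact: add0r. Qed.

Lemma hcoefS alpha n :
  hcoef alpha n.+1 =
    (if (l1 < n.+1 <= top1)%N && ((n == l1) || (l2 < n.+1 <= top2)%N) then alpha n else 0)
  + (if (l1 < n.+1 <= top1)%N && (l2 <= n.+1 < top2)%N then alpha n.+1 else 0).
Proof. by rewrite /hcoef dcomp_l_kindc /dcomp_r !isF_kindc. Qed.

Lemma homotopic_cellcP (f g : cellmap) :
  homotopic f g <->
  exists alpha, forall n, msub (f n) (g n) = nmor (kC n) (kD n) (hcoef alpha n).
Proof.
split=> [[h [Hh [H0 HS]]] | [alpha Halpha]].
  exists (fun n => aug (h n)) => -[|n].
    by rewrite H0 cdif_cellc (mcomp_dmor_r (Hh _)) hcoef0.
  by rewrite HS !cdif_cellc (mcomp_dmor_l (Hh _)) (mcomp_dmor_r (Hh _)) madd_nmor.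
exists (fun n => kmor (kC n) (kD n.+1) (alpha n) 0).
split=> [n|]; first exact: is_mor_kmor.
split=> [|n].
  by rewrite Halpha cdif_cellc (mcomp_dmor_r (is_mor_kmor _ _ _ _)) hcoef0 dcomp_r_aug_kmor.
rewrite Halpha !cdif_cellc (mcomp_dmor_l (is_mor_kmor _ _ _ _)).
rewrite (mcomp_dmor_r (is_mor_kmor _ _ _ _)) madd_nmor; apply: eq_nmor => _ nzD.
by rewrite dcomp_l_aug_kmor // dcomp_r_aug_kmor.
Qed.

Definition top_sum (f : cellmap) := \sum_(l2 <= k < top2.+1) mcoef (f k).

Lemma aug_low (f : cellmap) : aug (f l1) = mcoef (f l1).
Proof. by rewrite aug_nFF // isF_kindc ltnn. Qed.

Lemma chain_cellc_aug (f : cellmap) n :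
  is_chain_map f -> ~~ isZ (kC n.+1) -> ~~ isZ (kD n) ->
  (if dcomp_l (kC n.+1) (kC n) (kD n) then aug (f n) else 0)
  = (if dcomp_r (kC n.+1) (kD n.+1) then aug (f n.+1) else 0).
Proof.
case=> Hf Hc nzC nzD; move: (congr1 (@mcoef _ _) (Hc n)).
rewrite !cdif_cellc (mcomp_dmor_l (Hf _)) (mcomp_dmor_r (Hf _)).
by rewrite !mcoef_nmor (negbTE nzC) (negbTE nzD).
Qed.

Lemma aug_chain_step (f : cellmap) n : is_chain_map f ->
  (l1 <= n)%N -> (l2 <= n)%N -> (n < top1)%N -> (n < top2)%N ->
  aug (f n.+1) = if (n == l1) || (l2 < n)%N then aug (f n) else 0.
Proof.
move=> hf h1 h2 h3 h4.
have nzC : ~~ isZ (kC n.+1) by rewrite isZ_kindc; lia.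
have nzD : ~~ isZ (kD n) by rewrite isZ_kindc; lia.
move: (chain_cellc_aug hf nzC nzD); rewrite dcomp_l_kindc /dcomp_r !isF_kindc.
by do 3 case: ifP => ? //; lia.
Qed.

Lemma aug_chain_overlap (f : cellmap) : is_chain_map f ->
  forall n, (l1 < n)%N -> (l2 < n)%N -> (n <= top1)%N -> (n <= top2)%N ->
  aug (f n) = if (l1 < l2)%N then 0 else mcoef (f l1).
Proof.
move=> hf; elim=> [|n IH] h1 h2 h3 h4; first lia.
rewrite aug_chain_step //; try lia.
case: (eqVneq n l1) => [e|ne] /=; first by subst n; rewrite ifF ?aug_low //; lia.
case: (ltnP l2 n) => h5 /=; first by rewrite IH //; lia.
by rewrite ifT //; lia.
Qed.

Lemma mcoef_chain_low (f : cellmap) : is_chain_map f ->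
  (l2 <= l1)%N -> (top2 < top1)%N -> mcoef (f l1) = 0.
Proof.
move=> hf h1 h2; case: (ltnP top2 l1) => h3.
  by rewrite -aug_low; apply: aug_isZ; rewrite !isZ_kindc; lia.
have nzC : ~~ isZ (kC top2.+1) by rewrite isZ_kindc; lia.
have nzD : ~~ isZ (kD top2) by rewrite isZ_kindc; lia.
have top2_null : aug (f top2) = 0.
  move: (chain_cellc_aug hf nzC nzD); rewrite dcomp_l_kindc /dcomp_r !isF_kindc.
  by case: ifP => ?; case: ifP => ? //; lia.
case: (eqVneq top2 l1) => [e|ne]; first by rewrite -aug_low; move: top2_null; rewrite e.
by move: top2_null; rewrite (aug_chain_overlap hf) ?ifF //; lia.
Qed.

Lemma homotopic_of_invariants (f g : cellmap) :
  (forall n, is_mor (f n)) -> (forall n, is_mor (g n)) -> (top2 <= top1)%N ->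
  (forall n, (l1 < n)%N -> (l2 < n <= top2)%N -> aug (f n) = aug (g n)) ->
  ((l2 <= l1)%N -> mcoef (f l1) = mcoef (g l1)) ->
  ((l1.+2 <= l2)%N -> top_sum f = top_sum g) ->
  homotopic f g.
Proof.
move=> Hf Hg htop Haug Hlow Hsum.
pose z k := mcoef (f k) - mcoef (g k).
pose alpha n := \sum_(n.+1 <= k < top2.+1) z k.
have alpha_top n : (top2 <= n)%N -> alpha n = 0 by move=> h; rewrite /alpha big_geq.
have alphaS n : (n < top2)%N -> alpha n = z n.+1 + alpha n.+1.
  by move=> h; rewrite /alpha big_ltn.
have alpha_l2 : (l1.+2 <= l2)%N -> z l2 = alpha l2.
  move=> h; move/eqP: (Hsum h); rewrite -subr_eq0 /top_sum -sumrB big_ltn; last lia.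
  by move/eqP/F2_addr_eq0.
apply/homotopic_cellcP; exists alpha => n.
apply: mor_eq_nmor; [exact: is_mor_msub (Hf n) (Hg n) | move=> nzC nzD | move=> FC FD].
  rewrite mcoef_msub -/(z n); rewrite !isZ_kindc in nzC nzD.
  case: (eqVneq n l1) => [e|ne].
    by subst n; rewrite hcoef_nF ?isF_kindc ?ltnn // /z Hlow ?subrr //; lia.
  have [n' en] : exists n', n = n'.+1 by exists n.-1; lia.
  subst n; rewrite hcoefS.
  have -> : (if (l1 < n'.+1 <= top1)%N && (l2 <= n'.+1 < top2)%N then alpha n'.+1 else 0)
            = alpha n'.+1 by case: ifP => // ?; rewrite alpha_top //; lia.
  case: ifP => c1; first by rewrite alphaS ?F2_addrK //; lia.
  by rewrite add0r (_ : n'.+1 = l2) ?alpha_l2 //; lia.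
by rewrite !isF_kindc in FC FD; rewrite aug_msub Haug ?subrr //; lia.
Qed.

Lemma homotopic_of_low (f g : cellmap) : is_chain_map f -> (forall n, is_mor (g n)) ->
  (l2 <= l1)%N -> (top2 <= top1)%N ->
  (forall n, (l1 < n)%N -> (l2 < n <= top2)%N -> aug (g n) = mcoef (f l1)) ->
  mcoef (g l1) = mcoef (f l1) -> homotopic f g.
Proof.
move=> hf Hg h12 htop Haug Hlow; apply: homotopic_of_invariants => //; first exact: hf.1.
- by move=> n h1 h2; rewrite Haug // (aug_chain_overlap hf) ?ifF //; lia.
- by lia.
Qed.

Lemma homotopic_of_top_sum (f g : cellmap) : is_chain_map f -> (forall n, is_mor (g n)) ->
  (l1 < l2)%N -> (top2 <= top1)%N ->
  (forall n, (l1 < n)%N -> (l2 < n <= top2)%N -> aug (g n) = 0) ->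
  ((l1.+2 <= l2)%N -> top_sum g = top_sum f) -> homotopic f g.
Proof.
move=> hf Hg h12 htop Haug Hsum; apply: homotopic_of_invariants => //; first exact: hf.1.
- by move=> n h1 h2; rewrite Haug // (aug_chain_overlap hf) ?ifT //; lia.
- by lia.
- by move=> h; rewrite Hsum.
Qed.

Lemma homotopic0_of_above (f : cellmap) : is_chain_map f ->
  (l1 < l2)%N -> (top1 < top2)%N -> homotopic f (fun _ => mzero).
Proof.
move=> hf h12 htop.
pose alpha n := \sum_(l2 <= k < n.+1) mcoef (f k).
have alphaS n : (l2 <= n.+1)%N -> alpha n.+1 = alpha n + mcoef (f n.+1).
  by move=> h; rewrite /alpha big_nat_recr.
apply/homotopic_cellcP; exists alpha => n; rewrite msubm0.
apply: mor_eq_nmor; [exact: hf.1 | move=> nzC nzD | move=> FC FD].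
  rewrite !isZ_kindc in nzC nzD.
  have [n' en] : exists n', n = n'.+1 by exists n.-1; lia.
  subst n; rewrite hcoefS alphaS; last lia.
  case: ifP => c1; (case: ifP => c2; last lia); first by rewrite F2_addKr.
  by rewrite /alpha big_geq ?add0r //; lia.
by rewrite !isF_kindc in FC FD; rewrite (aug_chain_overlap hf) ?ifT //; lia.
Qed.

Lemma homotopic_mcoef_low (f g : cellmap) : homotopic f g -> mcoef (f l1) = mcoef (g l1).
Proof.
case/homotopic_cellcP => alpha /(_ l1) /(congr1 (@mcoef _ _)).
rewrite mcoef_msub mcoef_nmor hcoef_nF ?isF_kindc ?ltnn // if_same => /eqP.
by rewrite subr_eq0 => /eqP.
Qed.

Lemma homotopic_top_sum (f g : cellmap) : homotopic f g ->
  (l1.+2 <= l2)%N -> (top2 <= top1)%N -> top_sum f = top_sum g.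
Proof.
case/homotopic_cellcP => alpha Halpha h12 htop.
pose gamma n := if (l2 < n <= top2)%N then alpha n.-1 else 0.
apply/eqP; rewrite -subr_eq0 /top_sum -sumrB.
rewrite (telescope_sumr_eq gamma); [|lia|move=> k hk].
  by rewrite /gamma !ifF ?subrr //; lia.
rewrite -mcoef_msub Halpha mcoef_nmor !isZ_kindc ifF; last lia.
have [k' ek] : exists k', k = k'.+1 by exists k.-1; lia.
subst k; rewrite hcoefS (oppr_pchar2 pchar_F2) addrC /gamma /=.
by congr (_ + _); case: ifP => ?; case: ifP => ? //; lia.
Qed.

End Cells.

Section Maps.
Variables a b s t : nat.
Hypotheses (hba : (b <= a)%N) (hts : (t <= s)%N).

(* Sigma^-1 V has its H at index l1 and its top F at index a; W has its H at
   index l2 and its top at index s + 1. *)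
Local Notation l1 := (a - b)%N.
Local Notation l2 := (s - t).+1.

Lemma is_mor_map1 n : is_mor (map1 a b s t n).
Proof. exact: is_mor_std. Qed.

Lemma is_mor_map2 n : is_mor (map2 a b s t n).
Proof. exact: is_mor_std. Qed.

Lemma is_mor_map3 n : is_mor (map3 a b s t n).
Proof. by rewrite /map3; case: ifP => _; [exact: is_mor_std | exact: is_mor_mzero]. Qed.

Lemma aug_map1 n : (l1 < n <= a)%N -> (l2 < n <= s.+1)%N -> aug (map1 a b s t n) = 1.
Proof.
move=> h1 h2; rewrite /map1; case: kindcP => ?; try lia; case: kindcP => ?; try lia.
by rewrite /aug /= !mxE; apply/eqP.
Qed.

Lemma aug_map2 n : (l1 < n <= a)%N -> (l2 < n <= s.+1)%N -> aug (map2 a b s t n) = 1.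
Proof.
move=> h1 h2; rewrite /map2 (_ : (n == l1) = false); last lia.
case: kindcP => ?; try lia; case: kindcP => ?; try lia.
by rewrite /aug /= !mxE; apply/eqP.
Qed.

Lemma aug_map3 n : (l1 < n <= a)%N -> (l2 < n <= s.+1)%N -> aug (map3 a b s t n) = 0.
Proof.
move=> h1 h2; rewrite /map3; case: ifP => _; last exact: aug_mzero.
case: kindcP => ?; try lia; case: kindcP => ?; try lia.
by rewrite /aug /= !mxE; apply/eqP.
Qed.

Lemma mcoef_map1_low : l1 = l2 -> mcoef (map1 a b s t l1) = 1.
Proof.
move=> e; rewrite /map1; case: kindcP => ?; try lia; case: kindcP => ?; try lia.
by rewrite /= mxE.
Qed.

Lemma mcoef_map2_low : (l2 < l1 <= s.+1)%N -> mcoef (map2 a b s t l1) = 1.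
Proof.
move=> h; rewrite /map2 eqxx; case: kindcP => ?; try lia; case: kindcP => ?; try lia.
by rewrite /= mxE.
Qed.

Lemma top_sum_map0 : top_sum (map0 a b s t) = 0.
Proof. by rewrite /top_sum big1 // => *; exact: mcoef_mzero. Qed.

Lemma top_sum_map3 : (l1 < l2)%N -> (s < a)%N -> top_sum (map3 a b s t) = 1.
Proof.
move=> h12 hsa; rewrite /top_sum big_nat_recr /=; last lia.
rewrite big_nat_cond big1 ?add0r => [|k /andP[/andP[k1 k2] _]]; last first.
  by rewrite /map3 ifF ?mcoef_mzero //; lia.
rewrite (_ : ((s - t).+1 + t)%N = s.+1); last lia.
rewrite /map3 eqxx; case: kindcP => ?; try lia; case: kindcP => ?; try lia.
all: by rewrite /= mxE.
Qed.

Variable f : cmap a b s t.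
Hypothesis hf : is_chain_map f.

Lemma homotopic_map0_of_top_eq : a = s -> (t <= b)%N -> homotopic f (map0 a b s t).
Proof. by move=> eas htb; apply: homotopic0_of_above => //; lia. Qed.

Lemma homotopic_cases_low_le : (s < a)%N -> (l2 <= l1)%N ->
  homotopic f (map0 a b s t) \/
  (a = s.+1 /\ l1 = l2 /\ homotopic f (map1 a b s t)) \/
  (a = s.+1 /\ (l2 < l1)%N /\ homotopic f (map2 a b s t)).
Proof.
move=> hsa hl; case: (F2_cases (mcoef (f l1))) => c.
  left; apply: (homotopic_of_low hf (fun _ => is_mor_mzero _ _) hl); first lia.
    by move=> *; rewrite aug_mzero c.
  by rewrite mcoef_mzero c.
have e : a = s.+1.
  case: (ltnP s.+1 a) => h; last lia.
  suff : mcoef (f l1) = 0 by rewrite c => /eqP; rewrite oner_eq0.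
  by apply: (mcoef_chain_low hf hl); lia.
right; case: (ltnP l2 l1) => h12.
  right; do 2 split => //; apply: (homotopic_of_low hf is_mor_map2 hl); first lia.
    by move=> n *; rewrite c aug_map2 //; lia.
  by rewrite c mcoef_map2_low //; lia.
left; do 2 split => //; first lia.
apply: (homotopic_of_low hf is_mor_map1 hl); first lia.
  by move=> n *; rewrite c aug_map1 //; lia.
by rewrite c mcoef_map1_low //; lia.
Qed.

Lemma homotopic_cases_low_gt : (s < a)%N -> (l1 < l2)%N ->
  homotopic f (map0 a b s t) \/ ((l1.+2 <= l2)%N /\ homotopic f (map3 a b s t)).
Proof.
move=> hsa hl.
have [hsum|[hl2 hsum]] :
    ((l1.+2 <= l2)%N -> top_sum f = 0) \/ ((l1.+2 <= l2)%N /\ top_sum f = 1).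
  case: (leqP l1.+2 l2) => h; last by left=> ?; lia.
  by case: (F2_cases (top_sum f)) => c; [left | right].
- left; apply: (homotopic_of_top_sum hf (fun _ => is_mor_mzero _ _) hl); first lia.
    by move=> *; rewrite aug_mzero.
  by move=> h; rewrite hsum // top_sum_map0.
- right; split => //; apply: (homotopic_of_top_sum hf is_mor_map3 hl); first lia.
    by move=> n *; rewrite aug_map3 //; lia.
  by rewrite hsum top_sum_map3 //; lia.
Qed.

Lemma not_homotopic_map1_map0 : l1 = l2 ->
  homotopic f (map1 a b s t) -> ~ homotopic f (map0 a b s t).
Proof.
move=> hl H1 H0; suff : (1 : 'F_2) = 0 by move/eqP; rewrite oner_eq0.
rewrite -(mcoef_map1_low hl) -(homotopic_mcoef_low H1).
by rewrite (homotopic_mcoef_low H0) mcoef_mzero.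
Qed.

Lemma not_homotopic_map2_map0 : (l2 < l1 <= s.+1)%N ->
  homotopic f (map2 a b s t) -> ~ homotopic f (map0 a b s t).
Proof.
move=> hl H2 H0; suff : (1 : 'F_2) = 0 by move/eqP; rewrite oner_eq0.
rewrite -(mcoef_map2_low hl) -(homotopic_mcoef_low H2).
by rewrite (homotopic_mcoef_low H0) mcoef_mzero.
Qed.

Lemma not_homotopic_map3_map0 : (l1.+2 <= l2)%N -> (s < a)%N ->
  homotopic f (map3 a b s t) -> ~ homotopic f (map0 a b s t).
Proof.
move=> hl hsa H3 H0; suff : (1 : 'F_2) = 0 by move/eqP; rewrite oner_eq0.
have htop : (l2 + t <= l1 + b)%N by lia.
rewrite -(top_sum_map3 (ltnW hl) hsa) -(homotopic_top_sum H3 hl htop).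
by rewrite (homotopic_top_sum H0 hl htop) top_sum_map0.
Qed.

End Maps.

Theorem lemma8p7 (a b s t : nat)
  (hba : (b <= a)%N) (hts : (t <= s)%N) (hsa : (s <= a)%N)
  (heq : a = s -> (t <= b)%N)
  (f : cmap a b s t) (hf : is_chain_map f) :
  exactly_one4
    (tp_dcell a b = tp_cell s t /\ cowt_dcell a b = cowt_cell s t /\
       homotopic f (map1 a b s t))
    (tp_dcell a b = tp_cell s t /\ cowt_dcell a b > cowt_cell s t /\
       homotopic f (map2 a b s t))
    (tp_dcell a b >= tp_cell s t /\ cowt_dcell a b <= cowt_cell s t - 2 /\
       homotopic f (map3 a b s t))
    (homotopic f (map0 a b s t)).
Proof.
rewrite /exactly_one4 /tp_dcell /tp_cell /cowt_dcell /cowt_cell; split.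
  case: (eqVneq a s) => [eas|nas].
    by right; right; right; apply: homotopic_map0_of_top_eq => //; exact: heq.
  have {hsa nas} hsa : (s < a)%N by lia.
  case: (leqP (s - t).+1 (a - b)) => hl.
    case: (homotopic_cases_low_le hba hts hf hsa hl) => [H|[[e1 [e2 H]]|[e1 [e2 H]]]].
    - by right; right; right.
    - by left; split; [lia | split; [lia | exact: H]].
    - by right; left; split; [lia | split; [lia | exact: H]].
  case: (homotopic_cases_low_gt hba hts hf hsa hl) => [H|[h H]].
  - by right; right; right.
  - by right; right; left; split; [lia | split; [lia | exact: H]].
do ![split]; try by move=> [[? [? _]] [? [? _]]]; lia.
- by move=> [[? [? H1]] H0]; apply: (not_homotopic_map1_map0 hba hts _ H1 H0); lia.
- by move=> [[? [? H2]] H0]; apply: (not_homotopic_map2_map0 hba hts _ H2 H0); lia.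
- by move=> [[? [? H3]] H0]; apply: (not_homotopic_map3_map0 hba hts _ _ H3 H0); lia.
Qed.
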